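(* Assume the vertex degrees of $G$ are uniformly bounded, let $\theta\in(0,1)$, $\rho=\lim_nR_n^{1/n}$, and let $z\in\mathbb C$ with $|z|>\theta\rho$. Then every $f\in\mathrm{Lip}_\theta$ with $\mathcal Tf=zf$ lies in $D_1$, i.e. $f(e_1,e_2,\dots)$ depends only on $e_1$.
   Context: $G$ is a connected, locally finite graph (no loops, no multiple edges, every vertex of degree $\ge2$), possibly infinite. $E$ oriented edges with $\iota,\tau$, opposite $\bar e$; turn $e\rightsquigarrow e'$ iff $\tau(e)=\iota(e')$, $e'\ne\bar e$. $P$ = infinite paths $(e_1,e_2,\dots)$ with $e_i\rightsquigarrow e_{i+1}$; $(\mathcal Tf)(e_1,\dots)=\sum_{e_0\rightsquigarrow e_1}f(e_0,e_1,\dots)$. $R_n=\sup_e\#\{(e_{-n},\dots,e_0):e_i\rightsquigarrow e_{i+1},\ e_0=e\}$. $D_1$ = bounded functions on $P$ depending only on the first edge. $d_\theta(p,p')=\theta^{k-1}$, $k=\min\{i:e_i\ne e'_i\}$; $\mathrm{Lip}_\theta$ = bounded $f:P\to\mathbb C$ uniformly $d_\theta$-Lipschitz on each island $\{p:\iota(e_1)=v\}$. *)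

From mathcomp Require Import all_boot all_order all_algebra.
From mathcomp Require Import all_classical all_reals all_analysis.
From mathcomp Require Export complex.
Set Implicit Arguments. Unset Strict Implicit. Unset Printing Implicit Defensive.
Import Order.TTheory GRing.Theory Num.Theory.
Local Open Scope ring_scope.

(* A graph is given by its (finite, duplicate-free) neighbour lists:
   this encodes local finiteness. *)
Section Graph.
Variable V : eqType.
Variable nbrs : V -> seq V.

Definition adj (u v : V) : bool := v \in nbrs u.

Definition good_graph : Prop :=
  [/\ (forall v, uniq (nbrs v)),
      (forall u v, adj u v = adj v u),
      (forall v, ~~ adj v v),
      (forall v, 2 <= size (nbrs v))%N &
      (forall u v, exists s : seq V, path adj u s /\ last u s = v)].

Definition bounded_degree : Prop := exists D : nat, forall v, (size (nbrs v) <= D)%N.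

(* oriented edges: e = (iota e, tau e) *)
Definition edge := (V * V)%type.
Definition is_edge (e : edge) : bool := adj e.1 e.2.
Definition ebar (e : edge) : edge := (e.2, e.1).

Definition turn (e e' : edge) : bool :=
  [&& is_edge e, is_edge e', e.2 == e'.1 & e' != ebar e].

(* infinite paths (e_1, e_2, ...) are sequences p with p 0 = e_1 *)
Definition is_path (p : nat -> edge) : Prop :=
  is_edge (p 0%N) /\ forall i, turn (p i) (p i.+1).

Definition pcons (e : edge) (p : nat -> edge) : nat -> edge :=
  fun n => match n with 0 => e | k.+1 => p k end.

(* number of chains (e_{-n}, ..., e_0) with e_i ~> e_{i+1} and e_0 = e *)
Fixpoint nchains (n : nat) (e : edge) : nat :=
  match n with
  | 0 => 1
  | k.+1 => \sum_(w <- nbrs e.1 | w != e.2) nchains k (w, e.1)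
  end.

Variable R : realType.

Definition Rn (n : nat) : R :=
  sup [set (nchains n e)%:R | e in [set e : edge | is_edge e]]%classic.

Definition rho : R := limn (fun n => Rn n `^ (n%:R)^-1).

Definition transfer (f : (nat -> edge) -> R[i]) (p : nat -> edge) : R[i] :=
  \sum_(w <- nbrs (p 0%N).1 | w != (p 0%N).2) f (pcons (w, (p 0%N).1) p).

Definition toC (x : R) : R[i] := (x%:C)%C.

(* d_theta(p,p') = theta^(k-1), k = min{i >= 1 : e_i <> e'_i} (1-based);
   with 0-based indexing this is theta^k0, k0 the first differing index;
   d = 0 if p = p'. *)
Definition dtheta (theta : R) (p q : nat -> edge) : R :=
  match pselect (exists k, p k != q k) with
  | left h => theta ^+ (ex_minn h)
  | right _ => 0
  end.

Definition Lip (theta : R) (f : (nat -> edge) -> R[i]) : Prop :=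
  (exists M : R, forall p, is_path p -> `|f p| <= toC M) /\
  (exists L : R, forall p q, is_path p -> is_path q -> (p 0%N).1 = (q 0%N).1 ->
     `|f p - f q| <= toC L * toC (dtheta theta p q)).

Definition in_D1 (f : (nat -> edge) -> R[i]) : Prop :=
  (exists M : R, forall p, is_path p -> `|f p| <= toC M) /\
  (forall p q, is_path p -> is_path q -> p 0%N = q 0%N -> f p = f q).

End Graph.

From mathcomp Require Import all_boot all_order all_algebra.
From mathcomp Require Import all_classical all_reals all_analysis.
From mathcomp Require Import complex.
From mathcomp Require Import ring lra.
Set Implicit Arguments. Unset Strict Implicit. Unset Printing Implicit Defensive.
Import Order.TTheory GRing.Theory Num.Theory.
Local Open Scope classical_set_scope.
Local Open Scope ring_scope.

(* If p and q share their first edge, iterating T f = z f writes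
   z^n (f p - f q) as the sum, over the at most R_n chains w of length n that
   can precede p, of f (w p) - f (w q); the paths w p and w q agree on n more
   edges than p and q, so the Lipschitz bound gives
   |z|^n |f p - f q| <= R_n theta^n L d_theta(p, q).  Since R_n is
   submultiplicative, Fekete's lemma gives R_n <= c^n eventually for every
   c > rho; choosing c with theta c < |z| and letting n grow forces
   f p = f q. *)

Lemma powR_invn_exprn (R : realType) (x : R) n : 0 <= x -> (0 < n)%N ->
  (x `^ n%:R^-1) ^+ n = x.
Proof.
move=> x0 n0; rewrite -powR_mulrn ?powR_ge0 // -powRrM mulVf ?powRr1 //.
by rewrite pnatr_eq0 -lt0n.
Qed.

Lemma bernoulli_le (R : realDomainType) (d : R) n : 0 <= d ->
  1 + n%:R * d <= (1 + d) ^+ n.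
Proof.
move=> d0; elim: n => [|n IH]; first by rewrite mul0r addr0 expr0.
rewrite exprS; apply: le_trans (ler_wpM2l _ IH); last by rewrite addr_ge0.
have : 0 <= d * (n%:R * d) by rewrite !mulr_ge0.
rewrite -natr1; lra.
Qed.

Lemma geometric_domination_le0 (R : realType) (d K q r : R) : 0 <= q < r ->
  (\forall n \near \oo, r ^+ n * d <= K * q ^+ n) -> d <= 0.
Proof.
move=> /andP[q0 qr] dom; have r0 : 0 < r by apply: le_lt_trans qr.
rewrite leNgt; apply/negP => d0.
have ratio_cvg : K * (q / r) ^+ n @[n --> \oo] --> 0.
  rewrite -(mulr0 K); apply: cvgMl_tmp; apply: cvg_expr.
  by rewrite ger0_norm ?divr_ge0 ?(ltW r0) // ltr_pdivrMr // mul1r.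
near \oo => n.
have d_le : d <= K * (q / r) ^+ n.
  rewrite expr_div_n mulrA ler_pdivlMr ?exprn_gt0 // mulrC.
  by near: n.
have : K * (q / r) ^+ n < d by near: n; exact: cvgr_lt ratio_cvg _ d0.
by rewrite ltNge d_le.
Unshelve. all: by end_near.
Qed.

Section Fekete.
Variables (R : realType) (a : nat -> R) (C : R).
Hypotheses (a_ge1 : forall n, 1 <= a n) (a_le_expr : forall n, a n <= C ^+ n)
  (a_submul : forall m n, a (m + n) <= a m * a n).

Let root n := a n `^ n%:R^-1.

Let root_exprn n : (0 < n)%N -> root n ^+ n = a n.
Proof. by move=> n0; rewrite powR_invn_exprn // (le_trans ler01). Qed.

Let root_ge1 n : (0 < n)%N -> 1 <= root n.
Proof. by move=> n0; rewrite -(expr_ge1 n0) ?powR_ge0 // root_exprn. Qed.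

Lemma submul_mul_addn_le m q r : a (q * m + r) <= a m ^+ q * C ^+ r.
Proof.
elim: q => [|q IH]; first by rewrite mul0n add0n mul1r.
rewrite mulSn -addnA (le_trans (a_submul _ _)) // exprS -mulrA.
by rewrite ler_wpM2l // (le_trans ler01).
Qed.

Lemma submul_root_le_near m d : (0 < m)%N -> 0 < d ->
  \forall n \near \oo, root n <= root m * (1 + d).
Proof.
move=> m0 d0.
have C_ge1 : 1 <= C by rewrite -[C]expr1 (le_trans (a_ge1 1)).
near=> n.
have n0 : (0 < n)%N by near: n; exact: nbhs_infty_gt.
have Cm_le : C ^+ m <= (1 + d) ^+ n.
  apply: le_trans (bernoulli_le n (ltW d0)).
  have : C ^+ m / d <= n%:R by near: n; exact: nbhs_infty_ger.
  by rewrite ler_pdivrMr // => ?; lra.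
have an_le : a n <= root m ^+ n * (1 + d) ^+ n.
  rewrite {1}(divn_eq n m) (le_trans (submul_mul_addn_le _ _ _)) //.
  apply: ler_pM; rewrite ?exprn_ge0 ?(le_trans ler01) //.
  - rewrite -root_exprn // -exprM mulnC ler_weXn2l ?root_ge1 //.
    by rewrite leq_divM.
  - apply: le_trans Cm_le; rewrite ler_weXn2l //.
    by rewrite ltnW // ltn_pmod.
have rm0 : 0 <= root m by rewrite (le_trans ler01) ?root_ge1.
rewrite -(ler_pXn2r n0) ?nnegrE ?powR_ge0 ?mulr_ge0 ?addr_ge0 ?(ltW d0) //.
by rewrite root_exprn // exprMn.
Unshelve. all: by end_near.
Qed.

Lemma submul_root_cvg : root @ \oo --> inf [set root n | n in [set n | (0 < n)%N]].
Proof.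
set S := [set _ | _ in _]; set L := inf S.
have S_lb : has_lbound S by exists 0 => _ [n _ <-]; exact: powR_ge0.
have L_le n : (0 < n)%N -> L <= root n by move=> n0; apply: ge_inf => //; exists n.
apply/cvgrPdist_le => eps eps0.
have [_ [m m0 <-] root_m_lt] : exists2 x, S x & x < L + eps / 2.
  by apply: inf_adherent; [rewrite divr_gt0 | split=> //; exists (root 1); exists 1%N].
have rm0 : 0 < root m by rewrite (lt_le_trans ltr01) ?root_ge1.
have root_m_eps : root m * (1 + eps / (2 * root m)) = root m + eps / 2.
  by field; rewrite gt_eqF.
near=> n.
have n0 : (0 < n)%N by near: n; exact: nbhs_infty_gt.
rewrite distrC ger0_norm ?subr_ge0 ?L_le //.
have : root n <= root m * (1 + eps / (2 * root m)).
  by near: n; apply: submul_root_le_near; rewrite ?divr_gt0 ?mulr_gt0.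
by rewrite root_m_eps; lra.
Unshelve. all: by end_near.
Qed.

Lemma submul_lim_root_ge0 : 0 <= limn root.
Proof.
apply: limr_ge; first exact: cvgP submul_root_cvg.
by near=> n; exact: powR_ge0.
Unshelve. all: by end_near.
Qed.

Lemma submul_le_expr_near c : limn root < c -> \forall n \near \oo, a n <= c ^+ n.
Proof.
move=> Lc; have c0 : 0 <= c := le_trans submul_lim_root_ge0 (ltW Lc).
rewrite (cvg_lim _ submul_root_cvg) // in Lc.
near=> n.
have n0 : (0 < n)%N by near: n; exact: nbhs_infty_gt.
rewrite -root_exprn // ler_pXn2r ?nnegrE ?powR_ge0 //.
apply: ltW; near: n; exact: cvgr_lt submul_root_cvg _ Lc.
Unshelve. all: by end_near.
Qed.

End Fekete.

Section Chains.
Variables (V : eqType) (nbrs : V -> seq V).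
Hypothesis graph : good_graph nbrs.

Lemma good_graph_edge_sym u v : is_edge nbrs (u, v) -> is_edge nbrs (v, u).
Proof. by case: graph => _ adj_sym _ _ _; rewrite /is_edge /= adj_sym. Qed.

Lemma exists_nbr_neq v u : exists2 w, w \in nbrs v & w != u.
Proof.
case: graph => nbrs_uniq _ _ deg_ge2 _.
move: (nbrs_uniq v) (deg_ge2 v); case: (nbrs v) => [|w [|w' s]] //=.
rewrite inE negb_or => /andP[/andP[ww' _] _] _.
have [wu|] := eqVneq w u; last by exists w; rewrite ?mem_head.
by exists w'; rewrite ?inE ?eqxx ?orbT // -wu eq_sym.
Qed.

Lemma nchains_gt0 n e : (0 < nchains nbrs n e)%N.
Proof.
elim: n e => [|n IH] e //=; have [w w_nbr w_neq] := exists_nbr_neq e.1 e.2.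
by rewrite lt0n sum_nat_seq_neq0; apply/hasP; exists w => //; rewrite w_neq -lt0n IH.
Qed.

Variables (D : nat) (R : realType).
Hypothesis deg_le : forall v, (size (nbrs v) <= D)%N.

Lemma nchains_le_expn n e : (nchains nbrs n e <= D ^ n)%N.
Proof.
elim: n e => [|n IH] e //=.
rewrite (leq_trans (leq_sum _ (fun w _ => IH (w, e.1)))) //.
rewrite big_const_seq iter_addn_0 expnS mulnC leq_mul2r.
by rewrite (leq_trans (count_size _ _)) ?orbT.
Qed.

Lemma nchains_le_Rn n e : is_edge nbrs e -> (nchains nbrs n e)%:R <= Rn nbrs R n.
Proof.
move=> e_edge; apply: sup_upper_bound; last by exists e.
split; first by exists (nchains nbrs n e)%:R, e.
by exists (D ^ n)%:R => _ [e' _ <-]; rewrite ler_nat nchains_le_expn.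
Qed.

Variable e0 : edge V.
Hypothesis e0_edge : is_edge nbrs e0.

Lemma Rn_le_expr n : Rn nbrs R n <= D%:R ^+ n.
Proof.
apply: ge_sup; first by exists (nchains nbrs n e0)%:R, e0.
by move=> _ [e _ <-]; rewrite -natrX ler_nat nchains_le_expn.
Qed.

Lemma Rn_ge1 n : 1 <= Rn nbrs R n.
Proof. by apply: le_trans (nchains_le_Rn n e0_edge); rewrite ler1n nchains_gt0. Qed.

Lemma nchains_addn_le n m e : is_edge nbrs e ->
  (nchains nbrs (n + m) e)%:R <= (nchains nbrs n e)%:R * Rn nbrs R m.
Proof.
elim: n e => [|n IH] e e_edge; first by rewrite mul1r nchains_le_Rn.
rewrite addSn /= !natr_sum mulr_suml big_seq_cond [leRHS]big_seq_cond.
by apply: ler_sum => w /andP[w_nbr _]; apply/IH/good_graph_edge_sym.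
Qed.

Lemma Rn_submul m n : Rn nbrs R (m + n) <= Rn nbrs R m * Rn nbrs R n.
Proof.
apply: ge_sup; first by exists (nchains nbrs (m + n) e0)%:R, e0.
move=> _ [e e_edge <-]; apply: le_trans (nchains_addn_le m n e_edge) _.
by rewrite ler_wpM2r ?nchains_le_Rn // (le_trans ler01) ?Rn_ge1.
Qed.

Lemma rho_ge0 : 0 <= rho nbrs R.
Proof. exact: submul_lim_root_ge0 Rn_ge1 Rn_le_expr Rn_submul. Qed.

Lemma Rn_le_expr_near c : rho nbrs R < c -> \forall n \near \oo, Rn nbrs R n <= c ^+ n.
Proof. exact: submul_le_expr_near Rn_ge1 Rn_le_expr Rn_submul c. Qed.

End Chains.

Lemma normr_toC (R : realType) (w : R[i]) : `|w| = toC (Normc.normc w).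
Proof. by case: w. Qed.

Lemma normc_ge0 (R : realType) (w : R[i]) : 0 <= Normc.normc w.
Proof. by case: w => a b /=; rewrite sqrtr_ge0. Qed.

Lemma dtheta_pcons (V : eqType) (R : realType) (theta : R) (p q : nat -> edge V) e :
  dtheta theta (pcons e p) (pcons e q) = theta * dtheta theta p q.
Proof.
rewrite /dtheta; case: pselect => [neq_cons|eq_cons]; case: pselect => [neq|eq].
- rewrite -exprS; congr (_ ^+ _).
  case: ex_minnP => k k_neq k_min; case: ex_minnP => l l_neq l_min.
  case: k k_neq k_min => [|k] k_neq k_min; first by rewrite eqxx in k_neq.
  by congr S; apply/eqP; rewrite eqn_leq -ltnS (k_min l.+1) // l_min.
- exfalso; case: neq_cons => [[|k]] /=; first by rewrite eqxx.
  by move=> k_neq; apply: eq; exists k.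
- by exfalso; case: neq => k k_neq; apply: eq_cons; exists k.+1.
- by rewrite mulr0.
Qed.

Lemma is_path_pcons (V : eqType) (nbrs : V -> seq V) (p : nat -> edge V) w :
  good_graph nbrs -> is_path nbrs p -> w \in nbrs (p 0%N).1 -> w != (p 0%N).2 ->
  is_path nbrs (pcons (w, (p 0%N).1) p).
Proof.
move=> graph [p0_edge p_turn] w_nbr w_neq.
have w_edge : is_edge nbrs (w, (p 0%N).1) by apply: good_graph_edge_sym.
split=> // [[|i]] //=; rewrite /turn w_edge p0_edge eqxx /=.
by apply: contra w_neq => /eqP->.
Qed.

Lemma eigen_diff_le (V : eqType) (nbrs : V -> seq V) (R : realType)
    (theta L : R) (z : R[i]) (f : (nat -> edge V) -> R[i]) :
  good_graph nbrs ->
  (forall p q, is_path nbrs p -> is_path nbrs q -> p 0%N = q 0%N ->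
     `|f p - f q| <= toC L * toC (dtheta theta p q)) ->
  (forall p, is_path nbrs p -> transfer nbrs f p = z * f p) ->
  forall n p q, is_path nbrs p -> is_path nbrs q -> p 0%N = q 0%N ->
  `|z| ^+ n * `|f p - f q| <=
    toC ((nchains nbrs n (p 0%N))%:R * theta ^+ n * (L * dtheta theta p q)).
Proof.
move=> graph f_lip f_eigen; elim=> [|n IH] p q p_path q_path pq.
  by rewrite !(expr0, mul1r) /toC rmorphM; exact: f_lip.
rewrite exprSr -mulrA -normrM mulrBr -!f_eigen // /transfer -pq -sumrB.
apply: le_trans (ler_wpM2l (exprn_ge0 _ (normr_ge0 _)) (ler_norm_sum _ _ _)) _.
rewrite [nchains _ n.+1 _]/= natr_sum !mulr_suml /toC rmorph_sum mulr_sumr.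
rewrite big_seq_cond [leRHS]big_seq_cond; apply: ler_sum => w /andP[w_nbr w_neq].
have p_pcons := is_path_pcons graph p_path w_nbr w_neq.
have q_pcons := is_path_pcons graph q_path; rewrite -pq in q_pcons.
apply: le_trans (IH _ _ p_pcons (q_pcons _ w_nbr w_neq) erefl) _.
by rewrite /toC dtheta_pcons exprSr /= [L * _]mulrCA !mulrA.
Qed.

Unset Implicit Arguments.

Theorem mainTheorem8 (V : eqType) (nbrs : V -> seq V) (R : realType)
  (theta : R) (z : R[i]) (f : (nat -> edge V) -> R[i]) :
  good_graph nbrs -> bounded_degree nbrs ->
  0 < theta < 1 ->
  toC (theta * rho nbrs R) < `|z| ->
  Lip nbrs theta f ->
  (forall p, is_path nbrs p -> transfer nbrs f p = z * f p) ->
  in_D1 nbrs f.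
Proof.
move=> graph [D deg_le] /andP[theta0 _] z_gt [[M f_bound] [L f_lip]] f_eigen.
split=> [|p q p_path q_path pq]; first by exists M.
have e_edge : is_edge nbrs (p 0%N) by case: p_path.
pose r := Normc.normc z; pose d := Normc.normc (f p - f q).
pose K := L * dtheta theta p q.
have f_lip_edge p' q' : is_path nbrs p' -> is_path nbrs q' -> p' 0%N = q' 0%N ->
    `|f p' - f q'| <= toC L * toC (dtheta theta p' q').
  by move=> p'_path q'_path /(congr1 fst); exact: f_lip.
have osc n : r ^+ n * d <= (nchains nbrs n (p 0%N))%:R * theta ^+ n * K.
  have := eigen_diff_le graph f_lip_edge f_eigen n p_path q_path pq.
  by rewrite !normr_toC /toC -rmorphXn -rmorphM lecR.
have K0 : 0 <= K.
  by have := osc 0%N; rewrite !(expr0, mul1r); apply: le_trans; exact: normc_ge0.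
have rho0 : 0 <= rho nbrs R := rho_ge0 graph R deg_le e_edge.
have [c rho_c c_lt] : exists2 c, rho nbrs R < c & theta * c < r.
  have rho_lt : rho nbrs R < r / theta.
    by move: z_gt; rewrite ltr_pdivlMr // mulrC normr_toC /toC ltcR.
  exists ((rho nbrs R + r / theta) / 2); first by rewrite midf_lt.
  by rewrite mulrC -ltr_pdivlMr ?midf_lt.
have d_le0 : d <= 0.
  apply: (@geometric_domination_le0 _ d K (theta * c) r).
    by rewrite c_lt mulr_ge0 ?(ltW theta0) // (le_trans rho0) ?ltW.
  near=> n; apply: le_trans (osc n) _.
  rewrite exprMn mulrC ler_wpM2l // mulrC ler_wpM2l ?exprn_ge0 ?(ltW theta0) //.
  apply: le_trans (nchains_le_Rn R deg_le n e_edge) _.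
  near: n; exact (Rn_le_expr_near graph deg_le e_edge rho_c).
apply/eqP; rewrite -subr_eq0; apply/eqP/Normc.eq0_normc.
by apply/le_anti; rewrite d_le0 normc_ge0.
Unshelve. all: by end_near.
Qed.
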